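(* Let $H$ and $G$ be as in the construction described in the context. If $H$ is a solvable group of length $l$, then $G$ is a solvable group of length $l+2$.
   Context: Construction: $H$ is a group generated by a countable set $\{a^{(1)},a^{(2)},\ldots\}$. For groups $A,B$, the wreath product $A\,\mathrm{Wr}\,B$ is the semidirect product $A^B\rtimes B$, where $A^B$ is the group of all functions $B\to A$ with pointwise multiplication and $B$ acts by $(bf)(x)=f(xb)$. Let $Z=\langle z\rangle$ be infinite cyclic and let $b^{(i)}\in H^Z$ be given by $b^{(i)}(z^k)=a^{(i)}$ if $k>0$ and $b^{(i)}(z^k)=1$ otherwise. Let $K=\langle z,b^{(i)}\ (i\in\mathbb{N})\rangle\le H\,\mathrm{Wr}\,Z$. Let $\langle s\rangle$ be infinite cyclic and let $c\in K^{\langle s\rangle}$ be given by $c(s)=z$, $c(s^{2^i})=b^{(i)}$ for $i>0$, and $c(s^k)=1$ otherwise. Let $G=\langle c,s\rangle\le K\,\mathrm{Wr}\,\langle s\rangle$. *)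

From Stdlib Require Import ZArith Bool FunctionalExtensionality.
Open Scope Z_scope.

Record Group := {
  gcar :> Type;
  gmul : gcar -> gcar -> gcar;
  gone : gcar;
  ginv : gcar -> gcar;
  gassoc : forall x y z, gmul (gmul x y) z = gmul x (gmul y z);
  gid_l : forall x, gmul gone x = x;
  ginv_l : forall x, gmul (ginv x) x = gone }.

Arguments gmul {g} _ _.
Arguments gone {g}.
Arguments ginv {g} _.

Section Subgroups.
Variable T : Group.

Inductive gen (S : T -> Prop) : T -> Prop :=
| gen_in x : S x -> gen S x
| gen_one : gen S gone
| gen_mul x y : gen S x -> gen S y -> gen S (gmul x y)
| gen_inv x : gen S x -> gen S (ginv x).

Definition comm (x y : T) : T := gmul (gmul (ginv x) (ginv y)) (gmul x y).

Definition commset (P : T -> Prop) : T -> Prop :=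
  fun w => exists x y, P x /\ P y /\ w = comm x y.

Fixpoint derived (P : T -> Prop) (n : nat) : T -> Prop :=
  match n with
  | O => P
  | S m => gen (commset (derived P m))
  end.

Definition trivialset (P : T -> Prop) : Prop := forall x, P x -> x = gone.

Definition derived_length (P : T -> Prop) (l : nat) : Prop :=
  trivialset (derived P l) /\ (forall m, trivialset (derived P m) -> (l <= m)%nat).
End Subgroups.

Arguments gen {T} S _.
Arguments derived {T} P n _.
Arguments derived_length {T} P l.

(* Wreath product A Wr Z = A^Z ⋊ Z (all functions Z -> A), where Z acts by
   (b f)(x) = f(x b), i.e. (b.f)(x) = f(x + b) additively;
   (f,b)(g,b') = (f * (b.g), b + b'). *)
Section Wreath.
Variable A : Group.
Definition wr_car : Type := ((Z -> A) * Z)%type.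
Definition wr_mul (u v : wr_car) : wr_car :=
  (fun x => gmul (fst u x) (fst v (x + snd u)), snd u + snd v).
Definition wr_one : wr_car := (fun _ => gone, 0).
Definition wr_inv (u : wr_car) : wr_car :=
  (fun x => ginv (fst u (x - snd u)), - snd u).

Lemma wr_assoc x y z : wr_mul (wr_mul x y) z = wr_mul x (wr_mul y z).
Proof.
  destruct x as [f b], y as [g c], z as [h d]; unfold wr_mul; simpl.
  f_equal; [|ring]. apply functional_extensionality; intro t.
  rewrite gassoc, Z.add_assoc; reflexivity.
Qed.
Lemma wr_id_l x : wr_mul wr_one x = x.
Proof.
  destruct x as [f b]; unfold wr_mul, wr_one; simpl. f_equal.
  apply functional_extensionality; intro t. rewrite Z.add_0_r, gid_l; reflexivity.
Qed.
Lemma wr_inv_l x : wr_mul (wr_inv x) x = wr_one.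
Proof.
  destruct x as [f b]; unfold wr_mul, wr_inv, wr_one; simpl. f_equal; [|ring].
  apply functional_extensionality; intro t. apply ginv_l.
Qed.

Definition WrZ : Group := Build_Group wr_car wr_mul wr_one wr_inv wr_assoc wr_id_l wr_inv_l.
End Wreath.

Section Construction.
Variable H : Group.
Variable a : nat -> H.   (* a^(i) := a i, used for i >= 1 *)

Definition z_el : WrZ H := (fun _ => gone, 1).
Definition b_el (i : nat) : WrZ H := (fun k => if 0 <? k then a i else gone, 0).
Definition K_set : WrZ H -> Prop :=
  gen (fun x => x = z_el \/ exists i, (1 <= i)%nat /\ x = b_el i).

(* c(s) = z, c(s^(2^i)) = b^(i) for i > 0, c(s^k) = 1 otherwise *)
Definition c_el : WrZ (WrZ H) :=
  (fun k => if k =? 1 then z_el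
            else if (1 <? k) && (k =? 2 ^ Z.log2 k) then b_el (Z.to_nat (Z.log2 k))
            else gone, 0).
Definition s_el : WrZ (WrZ H) := (fun _ => gone, 1).

(* G = <c, s>, realized inside (H Wr Z) Wr <s>, which contains K Wr <s> *)
Definition G_set : WrZ (WrZ H) -> Prop := gen (fun x => x = c_el \/ x = s_el).
End Construction.

(* In a wreath product A Wr Z, commutators lie in the base group A^Z and are
   computed coordinatewise.  Hence if every element of a subgroup P has its
   coordinates in a subgroup Q of A, then P^(m+1) lies in the base and has its
   coordinates in Q^(m).  Conversely, evaluation at the coordinate 0 is a
   homomorphism on the base, and the commutator of a base element f with
   f(0) = 1 and the shift by -k evaluates at 0 to f(k).  So if P contains the
   shift and base elements whose coordinates generate Q, then Q^(m) is a
   homomorphic image of a subgroup of P^(m+1).  For K <= H Wr Z the coordinates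
   lie in H and a^(i) = b^(i)(z); for G <= K Wr <s> they lie in K, and
   z = c(s), b^(i) = c(s^(2^i)).  This gives derived length l + 1 for K and
   l + 2 for G. *)

From Stdlib Require Import ZArith Lia FunctionalExtensionality Classical.

Local Arguments gassoc {g} x y z.
Local Arguments gid_l {g} x.
Local Arguments ginv_l {g} x.
Local Arguments comm {T} x y.
Local Arguments commset {T} P _.
Local Arguments trivialset {T} P.

Section GroupFacts.
Variable T : Group.

Lemma ginv_r (x : T) : gmul x (ginv x) = gone.
Proof.
  rewrite <- (gid_l (gmul x (ginv x))), <- (ginv_l (ginv x)) at 1.
  rewrite gassoc, <- (gassoc (ginv x) x (ginv x)), ginv_l, gid_l.
  apply ginv_l.
Qed.

Lemma gid_r (x : T) : gmul x gone = x.
Proof. rewrite <- (ginv_l x), <- gassoc, ginv_r, gid_l. reflexivity. Qed.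

Lemma ginv_one : ginv (gone : T) = gone.
Proof. rewrite <- (gid_r (ginv gone)). apply ginv_l. Qed.

Record subgroup (P : T -> Prop) : Prop := {
  subgroup_one : P gone;
  subgroup_mul : forall x y, P x -> P y -> P (gmul x y);
  subgroup_inv : forall x, P x -> P (ginv x) }.

Lemma subgroup_comm (P : T -> Prop) x y :
  subgroup P -> P x -> P y -> P (comm x y).
Proof.
  intros [h1 h2 h3] hx hy. unfold comm. auto.
Qed.

Lemma subgroupT : subgroup (fun _ => True).
Proof. split; auto. Qed.

Lemma gen_subgroup (S : T -> Prop) : subgroup (gen S).
Proof. split; [apply gen_one | apply gen_mul | apply gen_inv]. Qed.

Lemma gen_least (S Q : T -> Prop) : subgroup Q -> (forall x, S x -> Q x) ->
  forall x, gen S x -> Q x.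
Proof. intros [h1 h2 h3] hS x hx. induction hx; auto. Qed.

Lemma gen_mono (S Q : T -> Prop) : (forall x, S x -> Q x) ->
  forall x, gen S x -> gen Q x.
Proof.
  intros hS. apply gen_least; [apply gen_subgroup|].
  intros x hx. apply gen_in. auto.
Qed.

Lemma derived_subgroup (P : T -> Prop) m : subgroup P -> subgroup (derived P m).
Proof. destruct m; [auto | intros _; apply gen_subgroup]. Qed.

Lemma derived_sub (P B : T -> Prop) : subgroup B -> (forall x, P x -> B x) ->
  forall m x, derived P m x -> B x.
Proof.
  intros hB hP m. induction m as [|m IH]; [exact hP|].
  apply gen_least; [exact hB|].
  intros w [x [y [hx [hy ->]]]]. apply subgroup_comm; auto.
Qed.

Lemma derived_mono (P Q : T -> Prop) : (forall x, P x -> Q x) ->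
  forall m x, derived P m x -> derived Q m x.
Proof.
  intros hP m. induction m as [|m IH]; [exact hP|].
  simpl. apply gen_mono. intros w [x [y [hx [hy ->]]]]. exists x, y. auto.
Qed.

Lemma derived_add (P : T -> Prop) n m : derived (derived P n) m = derived P (m + n).
Proof. induction m as [|m IH]; simpl; congruence. Qed.

Lemma derived_antitone (P : T -> Prop) : subgroup P ->
  forall m n, (m <= n)%nat -> forall x, derived P n x -> derived P m x.
Proof.
  intros hP m n hle. induction hle as [|n hle IH]; [auto|].
  intros x hx. apply IH.
  change (derived P (1 + n) x) in hx. rewrite <- derived_add in hx.
  revert x hx. apply derived_sub with (m := 1%nat); [apply derived_subgroup; exact hP|auto].
Qed.

Lemma derived_length_intro (P : T -> Prop) n : subgroup P ->
  trivialset (derived P (S n)) -> (exists x, derived P n x /\ x <> gone) ->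
  derived_length P (S n).
Proof.
  intros hP htriv [x [hx hne]]. split; [exact htriv|].
  intros m hm. destruct (le_lt_dec (S n) m) as [hle|hlt]; [exact hle|].
  exfalso. apply hne, hm. apply (derived_antitone P hP m n); [lia | exact hx].
Qed.

Lemma derived_length_nontrivial (P : T -> Prop) n :
  derived_length P (S n) -> exists x, derived P n x /\ x <> gone.
Proof.
  intros [_ hmin]. apply NNPP. intros hnone.
  assert (htriv : trivialset (derived P n)).
  { intros x hx. apply NNPP. intros hne. apply hnone. exists x. auto. }
  specialize (hmin n htriv). lia.
Qed.

End GroupFacts.

Arguments subgroup {T} P.

Section Homomorphism.
Variables T1 T2 : Group.
Variable f : T1 -> T2.
Variable B : T1 -> Prop.
Hypothesis hB : subgroup B.
Hypothesis f_mul : forall x y, B x -> B y -> f (gmul x y) = gmul (f x) (f y).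
Hypothesis f_inv : forall x, B x -> f (ginv x) = ginv (f x).
Hypothesis f_one : f gone = gone.

Definition image (P : T1 -> Prop) : T2 -> Prop := fun y => exists x, P x /\ y = f x.

Lemma image_subgroup (P : T1 -> Prop) : subgroup P -> (forall x, P x -> B x) ->
  subgroup (image P).
Proof.
  intros [h1 h2 h3] hP. split.
  - exists gone. auto.
  - intros u v [x [hx ->]] [y [hy ->]]. exists (gmul x y). rewrite f_mul; auto.
  - intros u [x [hx ->]]. exists (ginv x). rewrite f_inv; auto.
Qed.

Lemma hom_comm x y : B x -> B y -> f (comm x y) = comm (f x) (f y).
Proof.
  destruct hB as [h1 h2 h3]. intros hx hy. unfold comm.
  rewrite !f_mul, !f_inv; auto.
Qed.

Lemma derived_image (P : T1 -> Prop) : (forall x, P x -> B x) ->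
  forall m y, derived (image P) m y -> image (derived P m) y.
Proof.
  intros hP m. induction m as [|m IH]; [auto|].
  assert (hD : forall x, derived P m x -> B x) by (apply derived_sub; auto).
  apply gen_least.
  - apply image_subgroup; [apply gen_subgroup|].
    apply (derived_sub _ P B hB hP (S m)).
  - intros w [u [v [hu [hv ->]]]].
    destruct (IH u hu) as [x [hx ->]], (IH v hv) as [y [hy ->]].
    exists (comm x y). split; [apply gen_in; exists x, y; auto|].
    rewrite hom_comm; auto.
Qed.

Lemma derived_nontrivial_of_image (P : T1 -> Prop) (Q : T2 -> Prop) m y :
  (forall x, P x -> B x) -> (forall q, Q q -> image P q) ->
  derived Q m y -> y <> gone -> exists x, derived P m x /\ x <> gone.
Proof.
  intros hP hQ hy hne.
  destruct (derived_image P hP m y (derived_mono _ Q _ hQ m y hy)) as [x [hx ->]].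
  exists x. split; [exact hx|]. intros ->. auto.
Qed.

End Homomorphism.

Arguments image {T1 T2} f P _.

Section WreathProduct.
Variable A : Group.
Notation W := (WrZ A).

Definition coords_in (Q : A -> Prop) (u : W) : Prop := forall x, Q (fst u x).
Definition base (Q : A -> Prop) (u : W) : Prop := snd u = 0 /\ coords_in Q u.
Definition wr_shift (n : Z) : W := (fun _ => gone, n).

Lemma coords_in_subgroup Q : subgroup Q -> subgroup (coords_in Q).
Proof. intros [h1 h2 h3]. split; intros; intro; simpl; auto. Qed.

Lemma base_subgroup Q : subgroup Q -> subgroup (base Q).
Proof.
  intros hQ. destruct (coords_in_subgroup Q hQ) as [h1 h2 h3].
  split.
  - split; [reflexivity | exact h1].
  - intros [f b] [g c] [hb hf] [hc hg]. simpl in hb, hc. subst.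
    split; [reflexivity | auto].
  - intros [f b] [hb hf]. simpl in hb. subst. split; [reflexivity | auto].
Qed.

Lemma snd_comm (u v : W) : snd (comm u v) = 0.
Proof. destruct u as [f b], v as [g c]. simpl. ring. Qed.

Lemma coord_mul x (u v : W) : snd u = 0 -> fst (gmul u v) x = gmul (fst u x) (fst v x).
Proof. destruct u as [f b]. simpl. intros ->. rewrite Z.add_0_r. reflexivity. Qed.

Lemma coord_inv x (u : W) : snd u = 0 -> fst (ginv u) x = ginv (fst u x).
Proof. destruct u as [f b]. simpl. intros ->. rewrite Z.sub_0_r. reflexivity. Qed.

Lemma coord_comm x (u v : W) : snd u = 0 -> snd v = 0 ->
  fst (comm u v) x = comm (fst u x) (fst v x).
Proof.
  intros hu hv. unfold comm.
  assert (hinv : forall w : W, snd w = 0 -> snd (ginv w) = 0)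
    by (intros [f b]; simpl; intros ->; reflexivity).
  assert (hmul : forall w w' : W, snd w = 0 -> snd w' = 0 -> snd (gmul w w') = 0)
    by (intros [f b] [g c]; simpl; intros -> ->; reflexivity).
  rewrite !coord_mul, !coord_inv; auto.
Qed.

Lemma derived_succ_base (P : W -> Prop) (Q : A -> Prop) :
  subgroup Q -> (forall u, P u -> coords_in Q u) ->
  forall m u, derived P (S m) u -> base (derived Q m) u.
Proof.
  intros hQ hP m. induction m as [|m IH].
  - change (forall u, gen (commset P) u -> base Q u).
    apply gen_least; [apply base_subgroup; exact hQ|].
    intros _ [u [v [hu [hv ->]]]]. split; [apply snd_comm|].
    apply subgroup_comm; [apply coords_in_subgroup; exact hQ | auto | auto].
  - change (forall u, gen (commset (derived P (S m))) u ->
              base (gen (commset (derived Q m))) u).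
    apply gen_least; [apply base_subgroup, gen_subgroup|].
    intros _ [u [v [hu [hv ->]]]].
    destruct (IH u hu) as [hu0 hu'], (IH v hv) as [hv0 hv'].
    split; [apply snd_comm|]. intro x.
    rewrite coord_comm by assumption.
    apply gen_in. exists (fst u x), (fst v x). auto.
Qed.

Lemma base_trivial (Q : A -> Prop) : trivialset Q -> trivialset (base Q).
Proof.
  intros hQ [f b] [hb hf]. simpl in hb. subst.
  change (gone : W) with (fun _ : Z => (gone : A), 0).
  f_equal. apply functional_extensionality. intro x. apply hQ, hf.
Qed.

Lemma derived_succ_trivial (P : W -> Prop) (Q : A -> Prop) m :
  subgroup Q -> (forall u, P u -> coords_in Q u) ->
  trivialset (derived Q m) -> trivialset (derived P (S m)).
Proof.
  intros hQ hP htriv u hu.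
  exact (base_trivial _ htriv u (derived_succ_base P Q hQ hP m u hu)).
Qed.

Lemma wr_shift_mul m n : gmul (wr_shift m) (wr_shift n) = wr_shift (m + n).
Proof.
  unfold wr_shift. simpl. unfold wr_mul. simpl. f_equal.
  apply functional_extensionality. intro. apply gid_l.
Qed.

Lemma wr_shift_in (P : W -> Prop) : subgroup P -> P (wr_shift 1) ->
  forall n, P (wr_shift n).
Proof.
  intros [h1 h2 h3] h. apply Z.peano_ind.
  - exact h1.
  - intros n hn. change (P (wr_shift (n + 1))). rewrite <- wr_shift_mul. auto.
  - intros n hn. change (P (wr_shift (n + -1))). rewrite <- wr_shift_mul.
    apply h2; [exact hn|].
    replace (wr_shift (-1)) with (ginv (wr_shift 1)); [auto|].
    unfold wr_shift. simpl. unfold wr_inv. simpl. f_equal.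
    apply functional_extensionality. intro. apply ginv_one.
Qed.

Lemma coord0_comm_wr_shift (f : Z -> A) k : f 0 = gone ->
  fst (comm ((f, 0) : W) (wr_shift (- k))) 0 = f k.
Proof.
  intros hf0. simpl.
  rewrite hf0, ginv_one, !gid_r, Z.opp_involutive. apply gid_l.
Qed.

Lemma coord_in_derived1 (P : W -> Prop) (u : W) k :
  subgroup P -> P (wr_shift 1) -> P u -> snd u = 0 -> fst u 0 = gone ->
  exists v, derived P 1 v /\ fst v 0 = fst u k.
Proof.
  intros hP hs hu hu0 hf0. destruct u as [f b]. simpl in hu0, hf0. subst b.
  exists (comm ((f, 0) : W) (wr_shift (- k))). split.
  - apply gen_in. exists (f, 0), (wr_shift (- k)).
    split; [exact hu|]. split; [apply wr_shift_in; auto | reflexivity].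
  - apply coord0_comm_wr_shift. exact hf0.
Qed.

Lemma derived_succ_nontrivial (P : W -> Prop) (gens Q : A -> Prop) m y :
  (forall q, Q q -> gen gens q) ->
  (forall q, gens q -> exists u, derived P 1 u /\ fst u 0 = q) ->
  derived Q m y -> y <> gone -> exists u, derived P (S m) u /\ u <> gone.
Proof.
  intros hQ hgens hy hne.
  set (ev0 := fun u : W => fst u 0).
  set (B := base (fun _ => True)).
  assert (hB : subgroup B) by apply base_subgroup, subgroupT.
  assert (ev0_mul : forall u v, B u -> B v -> ev0 (gmul u v) = gmul (ev0 u) (ev0 v))
    by (intros u v [hu _] _; apply coord_mul, hu).
  assert (ev0_inv : forall u, B u -> ev0 (ginv u) = ginv (ev0 u))
    by (intros u [hu _]; apply coord_inv, hu).
  assert (hP1 : forall u, derived P 1 u -> B u).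
  { apply (derived_succ_base P (fun _ => True) (subgroupT A)). intros u _ x. exact I. }
  assert (himage : forall q, Q q -> image ev0 (derived P 1) q).
  { intros q hq. apply (gen_least _ gens); [| | exact (hQ q hq)].
    - apply (image_subgroup _ _ ev0 B ev0_mul ev0_inv eq_refl);
        [apply gen_subgroup | exact hP1].
    - intros q' hq'. destruct (hgens q' hq') as [u [hu <-]]. exists u. auto. }
  destruct (derived_nontrivial_of_image _ _ ev0 B hB ev0_mul ev0_inv eq_refl
              (derived P 1) Q m y hP1 himage hy hne) as [u [hu hune]].
  exists u. rewrite derived_add, Nat.add_1_r in hu. auto.
Qed.

End WreathProduct.

Arguments wr_shift {A} n.

Section Construction.
Variable H : Group.
Variable a : nat -> H.

Notation K := (K_set H a).
Notation G := (G_set H a).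

Lemma c_el_coord_pow2 (i : nat) : (1 <= i)%nat ->
  fst (c_el H a) (2 ^ Z.of_nat i) = b_el H a i.
Proof.
  intro hi. assert (h2 : 2 ^ 1 <= 2 ^ Z.of_nat i) by (apply Z.pow_le_mono_r; lia).
  simpl in h2. unfold c_el. simpl fst.
  rewrite (proj2 (Z.eqb_neq _ _)), (proj2 (Z.ltb_lt _ _)) by lia.
  rewrite Z.log2_pow2, Z.eqb_refl, Nat2Z.id by lia. reflexivity.
Qed.

Lemma G_coords_in_K u : G u -> coords_in (WrZ H) K u.
Proof.
  apply gen_least; [apply coords_in_subgroup, gen_subgroup|].
  intros v [-> | ->] k; simpl; [|apply gen_one].
  destruct (k =? 1); [apply gen_in; left; reflexivity|].
  destruct (andb (1 <? k) (k =? 2 ^ Z.log2 k)) eqn:E; [|apply gen_one].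
  apply gen_in. right. exists (Z.to_nat (Z.log2 k)). split; [|reflexivity].
  apply andb_prop in E. destruct E as [E _]. apply Z.ltb_lt in E.
  assert (h1 : Z.log2 2 <= Z.log2 k) by (apply Z.log2_le_mono; lia).
  simpl in h1. lia.
Qed.

Lemma G_derived_trivial l :
  trivialset (derived (fun _ : H => True) l) -> trivialset (derived G (S (S l))).
Proof.
  intros htriv.
  apply (derived_succ_trivial _ G K); [apply gen_subgroup | exact G_coords_in_K |].
  apply (derived_succ_trivial _ K (fun _ => True)); [apply subgroupT | | exact htriv].
  intros u _ x. exact I.
Qed.

Lemma K_derived_nontrivial l :
  (forall x : H, gen (fun y => exists i, (1 <= i)%nat /\ y = a i) x) ->
  derived_length (fun _ : H => True) l -> exists x, derived K l x /\ x <> gone.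
Proof.
  intros hgen hl. destruct l as [|l].
  - exists (z_el H). split; [apply gen_in; left; reflexivity|].
    intros e. apply (f_equal snd) in e. discriminate.
  - destruct (derived_length_nontrivial _ _ _ hl) as [h [hh hne]].
    apply (derived_succ_nontrivial _ K (fun y => exists i, (1 <= i)%nat /\ y = a i)
             (fun _ => True) l h); auto.
    intros _ [i [hi ->]].
    apply (coord_in_derived1 _ K (b_el H a i) 1); try reflexivity.
    + apply gen_subgroup.
    + apply gen_in. left. reflexivity.
    + apply gen_in. right. exists i. auto.
Qed.

Lemma G_derived_nontrivial l x :
  derived K l x -> x <> gone -> exists u, derived G (S l) u /\ u <> gone.
Proof.
  apply (derived_succ_nontrivial _ G
           (fun y => y = z_el H \/ exists i, (1 <= i)%nat /\ y = b_el H a i) K); [auto|].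
  assert (hc : forall k, exists u, derived G 1 u /\ fst u 0 = fst (c_el H a) k).
  { intros k. apply coord_in_derived1; try reflexivity.
    - apply gen_subgroup.
    - apply gen_in. right. reflexivity.
    - apply gen_in. left. reflexivity. }
  intros _ [-> | [i [hi ->]]].
  - exact (hc 1).
  - rewrite <- (c_el_coord_pow2 i hi). apply hc.
Qed.

End Construction.

Theorem corollary2 (H : Group) (a : nat -> H) (l : nat)
  (Hgen : forall x : H, gen (fun y => exists i, (1 <= i)%nat /\ y = a i) x)
  (Hsolv : derived_length (fun _ : H => True) l) :
  derived_length (G_set H a) (l + 2).
Proof.
  rewrite Nat.add_comm. simpl.
  apply derived_length_intro; [apply gen_subgroup | |].
  - apply G_derived_trivial. apply Hsolv.
  - destruct (K_derived_nontrivial H a l Hgen Hsolv) as [x [hx hne]].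
    exact (G_derived_nontrivial H a l x hx hne).
Qed.
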